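(* Let $n\ge 2$ and $1\le k\le n/2$ be integers, and let $w=\mathrm{A}^k\mathrm{M}^{n-k}$ be the word consisting of $k$ copies of a letter $\mathrm{A}$ followed by $n-k$ copies of a different letter $\mathrm{M}$. Then $f(w)=\max\{2(n-k)+1,\,4k\}$.
   Context: A word of length $n$ is a sequence $w=w_1w_2\cdots w_n$ of letters (symbols). Let $[n]=\{1,\dots,n\}$. An $n$-grid is a function $G:[n]^2\to\Sigma$, where $\Sigma$ is an arbitrary set of letters. The $i$th row of $G$ contains $w$ if $G(i,j)=w_j$ for all $1\le j\le n$, or $G(i,j)=w_{n-j+1}$ for all $1\le j\le n$. The $j$th column contains $w$ if $G(i,j)=w_i$ for all $i$, or $G(i,j)=w_{n-i+1}$ for all $i$. The main diagonal contains $w$ if $G(i,i)=w_i$ for all $i$ or $G(i,i)=w_{n-i+1}$ for all $i$; the anti-diagonal contains $w$ if $G(i,n-i+1)=w_i$ for all $i$ or $G(i,n-i+1)=w_{n-i+1}$ for all $i$. Let $f(w,G)$ be the number of the $2n+2$ lines ($n$ rows, $n$ columns, $2$ diagonals) of $G$ that contain $w$, and $f(w)=\max_G f(w,G)$ over all $n$-grids $G$. *)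

From mathcomp Require Import all_boot.
Set Implicit Arguments. Unset Strict Implicit. Unset Printing Implicit Defensive.

(* Indices are 0-based: position i in 'I_n corresponds to i+1 in the paper;
   the reversed position n-i+1 becomes rev_ord i (value n-1-i). *)

Section Grid.
Variable (T : eqType) (n : nat).

Definition word := 'I_n -> T.
Definition grid := 'I_n -> 'I_n -> T.

Definition line_contains (w : word) (L : 'I_n -> T) : bool :=
  [forall j, L j == w j] || [forall j, L j == w (rev_ord j)].

Definition row_line (G : grid) (i : 'I_n) : 'I_n -> T := fun j => G i j.
Definition col_line (G : grid) (j : 'I_n) : 'I_n -> T := fun i => G i j.
Definition diag_line (G : grid) : 'I_n -> T := fun i => G i i.
Definition antidiag_line (G : grid) : 'I_n -> T := fun i => G i (rev_ord i).

Definition fwG (w : word) (G : grid) : nat :=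
  #|[pred i | line_contains w (row_line G i)]|
  + #|[pred j | line_contains w (col_line G j)]|
  + line_contains w (diag_line G)
  + line_contains w (antidiag_line G).

End Grid.

Definition AkMword (T : eqType) (n k : nat) (A M : T) : word T n :=
  fun i => if (i < k)%N then A else M.

From mathcomp Require Import all_boot zify.
Set Implicit Arguments. Unset Strict Implicit. Unset Printing Implicit Defensive.

(* Split the positions into the first k, the last k and the n - 2k middle
   ones. A line contains w exactly when its A's fill one border block: the
   first if it reads w forwards, the last if backwards. Where two lines
   containing w cross, their readings of the common cell agree, which ties the
   block of each line to the direction of the other. Hence a middle row
   leaves border columns in only one block (and symmetrically); a diagonal
   containing w fixes the directions of all border rows and columns, which
   leaves at most two of the four border groups (rows or columns, first or
   last block); and with both diagonals no border row coexists with a border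
   column. Weighting border groups by k and middle ones by n - 2k bounds f(w)
   by max (2(n-k)+1, 4k). Two A-filled corner squares give 4k lines; making
   every row and column outside the first block, and the main diagonal, read
   w forwards gives 2(n-k)+1. *)

Lemma fwG_sym (T : eqType) (n : nat) (w : word T n) (G : grid T n) :
  (forall i j, G i j = G j i) ->
  fwG w G = 2 * #|[pred i | line_contains w (row_line G i)]|
            + line_contains w (diag_line G) + line_contains w (antidiag_line G).
Proof.
move=> symG; rewrite /fwG mul2n -addnn; congr (_ + _ + _ + _); apply: eq_card => j /=.
by rewrite /line_contains; congr orb; apply: eq_forallb => i; rewrite /col_line symG.
Qed.

Definition transpose (T : eqType) (n : nat) (G : grid T n) : grid T n := fun i j => G j i.

Lemma card_sum_pred (T : finType) (P : pred T) : #|P| = \sum_(x : T) P x.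
Proof. by rewrite -sum1_card big_mkcond; apply: eq_bigr => x _; rewrite unfold_in; case: (P x). Qed.

Section AkMk.
Variables (T : eqType) (A M : T) (n k : nat).
Hypotheses (hAM : A != M) (k_gt0 : 0 < k) (hkn : 2 * k <= n).

Local Notation w := (@AkMword T n k A M).

Definition block (i : nat) : option bool :=
  if i < k then Some false else if n - k <= i then Some true else None.

Lemma block_rev (i : 'I_n) : block (rev_ord i) = omap negb (block i).
Proof.
have := ltn_ord i; rewrite /block /= => lt_i_n.
case: (ltnP i k) => ?; case: (leqP (n - k) i) => ?;
  case: (ltnP (n - i.+1) k) => ?; case: (leqP (n - k) (n - i.+1)) => ? //=; lia.
Qed.

Lemma sum_block (F : option bool -> nat) :
  \sum_(i < n) F (block i) = k * F (Some false) + k * F (Some true) + (n - 2 * k) * F None.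
Proof.
rewrite -(big_mkord xpredT (fun i => F (block i))).
rewrite (big_cat_nat _ (n := k)) 1?(big_cat_nat _ (n := n - k) (m := k)) //=; try lia.
rewrite addnA.
rewrite (eq_big_nat _ _ (F2 := fun=> F (Some false))); last first.
  by move=> i /andP[_ lt_i_k]; rewrite /block lt_i_k.
rewrite [X in _ + X + _ = _](eq_big_nat _ _ (F2 := fun=> F None)); last first.
  by move=> i /andP[le_k_i lt_i]; rewrite /block ltnNge le_k_i leqNgt lt_i.
rewrite [X in _ + X = _](eq_big_nat _ _ (F2 := fun=> F (Some true))); last first.
  by move=> i /andP[le_i lt_i_n]; rewrite /block le_i; case: ltnP => //; lia.
rewrite !sum_nat_const_nat.
have -> : n - (n - k) = k by lia.
have -> : n - k - k = n - 2 * k by lia.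
by rewrite subn0 addnAC.
Qed.

(* w read forwards is [pattern false], read backwards [pattern true]. *)
Definition pattern (s : bool) : word T n := fun j => if block j == Some s then A else M.

Lemma pattern_eqA s j : (pattern s j == A) = (block j == Some s).
Proof. by rewrite /pattern; case: (block j == Some s); rewrite ?eqxx // eq_sym (negbTE hAM). Qed.

Lemma line_containsP (L : word T n) :
  reflect (exists s, L =1 pattern s) (line_contains w L).
Proof.
have w_fwd j : w j = pattern false j.
  by rewrite /AkMword /pattern /block; case: (j < k) => //=; case: (n - k <= j).
have w_bwd j : w (rev_ord j) = pattern true j.
  by rewrite w_fwd /pattern block_rev; case: (block j) => [[]|].
apply: (iffP orP) => [[]/forallP eqL|[[] eqL]].
- by exists false => j; rewrite (eqP (eqL j)) w_fwd.
- by exists true => j; rewrite (eqP (eqL j)) w_bwd.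
- by right; apply/forallP => j; rewrite eqL w_bwd.
- by left; apply/forallP => j; rewrite eqL w_fwd.
Qed.

Lemma pattern_cross (L1 L2 : word T n) s t (x y : 'I_n) :
  L1 =1 pattern s -> L2 =1 pattern t -> L1 x = L2 y ->
  (block x == Some s) = (block y == Some t).
Proof. by move=> eL1 eL2 exy; rewrite -!pattern_eqA -eL1 -eL2 exy. Qed.

Definition occurs (Ls : 'I_n -> word T n) (x : option bool) : bool :=
  [exists i, line_contains w (Ls i) && (block i == x)].

Lemma occursP (Ls : 'I_n -> word T n) x :
  reflect (exists2 i : 'I_n, block i = x & exists s, Ls i =1 pattern s) (occurs Ls x).
Proof.
apply: (iffP existsP) => [[i /andP[/line_containsP eL /eqP bi]]|[i bi /line_containsP eL]].
  by exists i.
by exists i; rewrite eL bi eqxx.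
Qed.

Lemma card_lines_le (Ls : 'I_n -> word T n) :
  #|[pred i | line_contains w (Ls i)]| <=
  k * occurs Ls (Some false) + k * occurs Ls (Some true) + (n - 2 * k) * occurs Ls None.
Proof.
rewrite card_sum_pred -(sum_block (occurs Ls)); apply: leq_sum => i _ /=.
case: (boolP (line_contains w (Ls i))) => // Li; rewrite lt0b.
by apply/existsP; exists i; rewrite Li eqxx.
Qed.

Lemma card_lines_block (Ls : 'I_n -> word T n) (Q : pred (option bool)) :
  (forall i, line_contains w (Ls i) = Q (block i)) ->
  #|[pred i | line_contains w (Ls i)]| =
  k * Q (Some false) + k * Q (Some true) + (n - 2 * k) * Q None.
Proof.
by move=> LsQ; rewrite card_sum_pred -(sum_block Q); apply: eq_bigr => i _ /=; rewrite LsQ.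
Qed.

Lemma middle_row_border_cols (G : grid T n) :
  occurs (row_line G) None
  + occurs (col_line G) (Some false) + occurs (col_line G) (Some true) <= 2.
Proof.
case: occursP => [[i bi [s rowi]]|_]; last by case: occurs; case: occurs.
have col_block q : occurs (col_line G) (Some q) -> q = ~~ s.
  case/occursP=> j bj [t colj].
  by have := pattern_cross rowi colj (erefl (G i j)); rewrite bi bj; case: (q); case: (s).
suff: ~~ (occurs (col_line G) (Some false) && occurs (col_line G) (Some true)) by lia.
by apply/andP=> [[/col_block cF /col_block cT]]; rewrite -cT in cF.
Qed.

Lemma middle_col_border_rows (G : grid T n) :
  occurs (col_line G) None
  + occurs (row_line G) (Some false) + occurs (row_line G) (Some true) <= 2.
Proof. exact: (middle_row_border_cols (transpose G)). Qed.

Definition border_groups (G : grid T n) : nat :=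
  occurs (row_line G) (Some false) + occurs (row_line G) (Some true)
  + occurs (col_line G) (Some false) + occurs (col_line G) (Some true).

Lemma border_groups_le2_of_sides (G : grid T n) (s t : bool) :
  (forall (i : 'I_n) s', block i != None -> row_line G i =1 pattern s' -> s' = s) ->
  (forall (j : 'I_n) t', block j != None -> col_line G j =1 pattern t' -> t' = t) ->
  border_groups G <= 2.
Proof.
move=> row_side col_side.
have cross p q : occurs (row_line G) (Some p) -> occurs (col_line G) (Some q) ->
    (q == s) = (p == t).
  case/occursP=> i bi [s' rowi]; case/occursP=> j bj [t' colj].
  rewrite -(row_side i s') ?bi // -(col_side j t') ?bj //.
  by have := pattern_cross rowi colj (erefl (G i j)); rewrite bi bj.
have rows_both q : occurs (row_line G) (Some false) -> occurs (row_line G) (Some true) ->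
    ~~ occurs (col_line G) (Some q).
  by move=> rF rT; apply/negP=> cq; move: (cross _ _ rF cq); rewrite (cross _ _ rT cq); case: (t).
have cols_both p : occurs (col_line G) (Some false) -> occurs (col_line G) (Some true) ->
    ~~ occurs (row_line G) (Some p).
  by move=> cF cT; apply/negP=> rp; move: (cross _ _ rp cF); rewrite -(cross _ _ rp cT); case: (s).
move: (rows_both false) (rows_both true) (cols_both false) (cols_both true).
rewrite /border_groups; lia.
Qed.

Lemma diag_row_side (G : grid T n) e (i : 'I_n) s :
  diag_line G =1 pattern e -> block i != None -> row_line G i =1 pattern s -> s = e.
Proof.
move=> diagG bi rowi; have := pattern_cross rowi diagG (erefl (G i i)).
by case: (block i) bi => // p _ /=; case: p; case: (s); case: (e).
Qed.

Lemma antidiag_row_side (G : grid T n) e (i : 'I_n) s :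
  antidiag_line G =1 pattern e -> block i != None -> row_line G i =1 pattern s -> s = ~~ e.
Proof.
move=> adiagG bi rowi; have := pattern_cross rowi adiagG (erefl (G i (rev_ord i))).
by rewrite block_rev; case: (block i) bi => // p _ /=; case: p; case: (s); case: (e).
Qed.

Lemma antidiag_col_side (G : grid T n) e (j : 'I_n) t :
  antidiag_line G =1 pattern e -> block j != None -> col_line G j =1 pattern t -> t = e.
Proof.
move=> adiagG bj colj.
have := pattern_cross colj adiagG (y := rev_ord j) (x := rev_ord j).
rewrite /antidiag_line rev_ordK block_rev => /(_ erefl).
by case: (block j) bj => // p _ /=; case: p; case: (t); case: (e).
Qed.

Lemma diag_border_groups_le2 (G : grid T n) :
  line_contains w (diag_line G) -> border_groups G <= 2.
Proof.
case/line_containsP=> e diagG; apply: (border_groups_le2_of_sides (s := e) (t := e)) => i s bi.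
  exact: diag_row_side.
exact: (diag_row_side (G := transpose G)).
Qed.

Lemma antidiag_border_groups_le2 (G : grid T n) :
  line_contains w (antidiag_line G) -> border_groups G <= 2.
Proof.
case/line_containsP=> e adiagG; apply: (border_groups_le2_of_sides (s := ~~ e) (t := e)) => i s bi.
  exact: antidiag_row_side.
exact: antidiag_col_side.
Qed.

Lemma diags_no_border_row_col (G : grid T n) :
  line_contains w (diag_line G) -> line_contains w (antidiag_line G) ->
  ~~ ((occurs (row_line G) (Some false) || occurs (row_line G) (Some true))
      && (occurs (col_line G) (Some false) || occurs (col_line G) (Some true))).
Proof.
case/line_containsP=> e diagG /line_containsP[e' adiagG].
have border (Ls : 'I_n -> word T n) : occurs Ls (Some false) || occurs Ls (Some true) ->
    exists2 i : 'I_n, block i != None & exists s, Ls i =1 pattern s.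
  by case/orP=> /occursP[i bi Li]; exists i; rewrite ?bi.
apply/negP=> /andP[/border[i bi [s rowi]] /border[j bj [t colj]]].
move: (diag_row_side diagG bi rowi) (antidiag_row_side adiagG bi rowi).
move: (diag_row_side (G := transpose G) diagG bj colj) (antidiag_col_side adiagG bj colj).
by move=> -> -> ->; case: (e').
Qed.

Lemma weighted_line_count_le (rF rT rN cF cT cN dg ad : bool) :
  rN + cF + cT <= 2 -> cN + rF + rT <= 2 ->
  (dg || ad -> rF + rT + cF + cT <= 2) ->
  (dg -> ad -> ~~ ((rF || rT) && (cF || cT))) ->
  k * rF + k * rT + (n - 2 * k) * rN + (k * cF + k * cT + (n - 2 * k) * cN) + dg + ad
    <= maxn (2 * (n - k) + 1) (4 * k).
Proof. by move: rF rT rN cF cT cN dg ad; do 8!case; rewrite ?muln0 ?muln1; lia. Qed.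

Lemma fwG_le (G : grid T n) : fwG w G <= maxn (2 * (n - k) + 1) (4 * k).
Proof.
apply: leq_trans (weighted_line_count_le (middle_row_border_cols G) (middle_col_border_rows G)
  _ (@diags_no_border_row_col G)).
  by rewrite /fwG !leq_add2r leq_add ?card_lines_le.
by case/orP=> [/diag_border_groups_le2|/antidiag_border_groups_le2].
Qed.

Fact n_gt0 : 0 < n. Proof. lia. Qed.

Definition first_index : 'I_n := Ordinal n_gt0.
Local Notation last_index := (rev_ord first_index).

Lemma block_first : block first_index = Some false.
Proof. by rewrite /block /= k_gt0. Qed.

Lemma block_last : block last_index = Some true.
Proof. by rewrite block_rev block_first. Qed.

Lemma border_eq_not_contained (L : word T n) (i j : 'I_n) :
  block i = Some false -> block j = Some true -> L i = L j -> ~~ line_contains w L.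
Proof.
move=> bi bj eLij; apply/line_containsP=> [[s eL]]; move: eLij.
by rewrite !eL /pattern bi bj; case: (s) => /eqP; rewrite ?(negbTE hAM) // eq_sym (negbTE hAM).
Qed.

Definition corners_grid : grid T n :=
  fun i j => if (block i == block j) && (block i != None) then A else M.

Lemma corners_grid_sym i j : corners_grid i j = corners_grid j i.
Proof. by rewrite /corners_grid eq_sym; case: eqP => // ->. Qed.

Lemma corners_row i : line_contains w (row_line corners_grid i) = (block i != None).
Proof.
case bi: (block i) => [s|] /=.
  by apply/line_containsP; exists s => j; rewrite /row_line /corners_grid /pattern bi eq_sym andbT.
apply/negbTE/(border_eq_not_contained block_first block_last).
by rewrite /row_line /corners_grid bi !andbF.
Qed.

Lemma fwG_corners : fwG w corners_grid = 4 * k.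
Proof.
have no_diag : ~~ line_contains w (diag_line corners_grid).
  apply: (border_eq_not_contained block_first block_last).
  by rewrite /diag_line /corners_grid !eqxx block_first block_last.
have no_antidiag : ~~ line_contains w (antidiag_line corners_grid).
  apply: (border_eq_not_contained block_first block_last).
  by rewrite /antidiag_line /corners_grid rev_ordK block_first block_last.
rewrite fwG_sym; last exact: corners_grid_sym.
rewrite (negbTE no_diag) (negbTE no_antidiag).
rewrite (card_lines_block (Q := fun x => x != None) corners_row) /=.
lia.
Qed.

Definition first_block_grid : grid T n := fun i j =>
  if block i == Some false then
    if block j == Some false then (if i == j then A else M) else A
  else pattern false j.

Lemma first_block_grid_sym i j : first_block_grid i j = first_block_grid j i.
Proof.
rewrite /first_block_grid /pattern [i == j]eq_sym.
by case: (block i == Some false); case: (block j == Some false).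
Qed.

Lemma first_block_row i :
  line_contains w (row_line first_block_grid i) = (block i != Some false).
Proof.
rewrite /row_line /first_block_grid; have [bi|bi] := eqVneq (block i) (Some false).
  apply/negbTE/(border_eq_not_contained bi block_last).
  by rewrite eqxx bi block_last.
by apply/line_containsP; exists false.
Qed.

Lemma fwG_first_block : fwG w first_block_grid = 2 * (n - k) + 1.
Proof.
have diag : line_contains w (diag_line first_block_grid).
  apply/line_containsP; exists false => i.
  by rewrite /diag_line /first_block_grid /pattern eqxx; case: (block i == Some false).
have no_antidiag : ~~ line_contains w (antidiag_line first_block_grid).
  apply: (border_eq_not_contained block_first block_last).
  by rewrite /antidiag_line /first_block_grid /pattern rev_ordK block_first block_last.
rewrite fwG_sym; last exact: first_block_grid_sym.
rewrite diag (negbTE no_antidiag).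
rewrite (card_lines_block (Q := fun x => x != Some false) first_block_row) /=.
lia.
Qed.

End AkMk.

Theorem theorem5 (T : eqType) (A M : T) (n k : nat) :
  A != M -> (2 <= n)%N -> (1 <= k)%N -> (2 * k <= n)%N ->
  let m := maxn (2 * (n - k) + 1) (4 * k) in
  (exists G : grid T n, fwG (@AkMword T n k A M) G = m) /\
  (forall G : grid T n, (fwG (@AkMword T n k A M) G <= m)%N).
Proof.
move=> hAM _ k_gt0 hkn m; split; last exact: fwG_le.
rewrite /m; case: leqP => _.
  by exists (corners_grid A M k); exact: fwG_corners.
by exists (first_block_grid A M k); exact: fwG_first_block.
Qed.
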